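(* Let $n$ be a square-free integer with $n\neq 1$ and let $\lambda\geq 3$ be an integer. For integers $s$ with $(s-1)^2>n$ put $\alpha_s=(s^2-s-n,\ (s-1)^2-n,\ s^2-n)\in A(n)$. Then there is $s_0$ such that for all integers $s>t\geq s_0$, the elements $\alpha_s$ and $\alpha_t$ lie in different $H(\lambda)$-orbits of $A(n)$; in fact every element $(a',b',c')$ of the $H(\lambda)$-orbit of $\alpha_s$ satisfies $|a'|\geq s^2-s-n$.
   Context: $A(n)=\{(a,b,c)\in\mathbb{Z}^3: bc=a^2-n\}$, in bijection with $\mathbb{Q}^*(\sqrt n)=\{\frac{a+\sqrt n}{c}: a,c\in\mathbb Z, c\neq 0, \frac{a^2-n}{c}\in\mathbb Z\}$ via $\frac{a+\sqrt n}{c}\mapsto (a,\frac{a^2-n}{c},c)$. $H(\lambda)$ is the group generated by $x:z\mapsto -1/z$ and $w_\lambda:z\mapsto z+\lambda$, acting on triples by $x(a,b,c)=(-a,c,b)$ and $w_\lambda(a,b,c)=(a+\lambda c,\,2\lambda a+b+\lambda^2c,\,c)$. *)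

From mathcomp Require Import all_boot all_order all_algebra.
Set Implicit Arguments. Unset Strict Implicit. Unset Printing Implicit Defensive.
Import Order.TTheory GRing.Theory Num.Theory.
Local Open Scope ring_scope.

Definition triple := (int * int * int)%type.

Definition inA (n : int) (t : triple) : Prop :=
  let: (a, b, c) := t in b * c = a ^+ 2 - n.

Definition squarefree (n : int) : Prop :=
  forall d : int, (d ^+ 2 %| n)%Z -> `|d| = 1.

(* action of the generators x : z |-> -1/z and w_lambda : z |-> z + lambda *)
Definition act_x (t : triple) : triple :=
  let: (a, b, c) := t in (- a, c, b).

Definition act_w (lam : int) (t : triple) : triple :=
  let: (a, b, c) := t in (a + lam * c, 2 * lam * a + b + lam ^+ 2 * c, c).

(* H(lambda)-orbit: closure under x, w_lambda and w_lambda^{-1} = w_{-lambda}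
   (x is an involution, so this is the orbit under the generated group). *)
Inductive Horbit (lam : int) (t : triple) : triple -> Prop :=
  | orb_refl : Horbit lam t t
  | orb_x u : Horbit lam t u -> Horbit lam t (act_x u)
  | orb_w u : Horbit lam t u -> Horbit lam t (act_w lam u)
  | orb_winv u : Horbit lam t u -> Horbit lam t (act_w (- lam) u).

Definition alpha (n s : int) : triple :=
  (s ^+ 2 - s - n, (s - 1) ^+ 2 - n, s ^+ 2 - n).

From mathcomp Require Import all_boot all_order all_algebra.
From mathcomp Require Import ring lra zify.
Import Order.TTheory GRing.Theory Num.Theory.
Local Open Scope ring_scope.
Set Implicit Arguments. Unset Strict Implicit.

(* Ping-pong argument for the H(lambda)-orbit of alpha_s.

   Every element of H(lambda) is a reduced word alternating x with powers
   w_lambda^k, k <> 0, and w_lambda^k acts on triples as the translation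
   act_w (k * lambda).  Call a triple (a, b, c) "c-dominated" if
   2|a| <= 3|c| and "b-dominated" if 2|a| <= 3|b|.  Provided |lambda| >= 3
   and 9|n| <= 5 a0^2, a translation by k * lambda (k <> 0) maps a
   c-dominated triple of A(n) with |a| >= a0 to a b-dominated one whose
   first entry has not decreased, and x exchanges the two kinds of
   dominance while keeping |a|.  Hence along a reduced word the first entry
   never drops below a0, provided the starting triple is dominated in both
   ways.  For s >= |n| + 5 the triple alpha_s is, with a0 = s^2 - s - n;
   since s^2 - s - n is strictly increasing in s, the orbits of distinct
   alpha_s are then disjoint. *)

Lemma act_xK : involutive act_x.
Proof. by case=> [[a b] c] /=; rewrite !opprK. Qed.

Lemma act_w0 (t : triple) : act_w 0 t = t.
Proof. by case: t => [[a b] c] /=; congr (_, _, _); ring. Qed.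

Lemma act_wD (u v : int) (t : triple) : act_w u (act_w v t) = act_w (v + u) t.
Proof. by case: t => [[a b] c] /=; congr (_, _, _); ring. Qed.

Inductive letter := Start | LastX | LastW.

Inductive reduced (lam : int) (p0 : triple) : triple -> letter -> Prop :=
  | red_nil : reduced lam p0 p0 Start
  | red_x p l : reduced lam p0 p l -> l <> LastX -> reduced lam p0 (act_x p) LastX
  | red_w p l k : reduced lam p0 p l -> l <> LastW -> k != 0 ->
      reduced lam p0 (act_w (k * lam) p) LastW.

Lemma reduced_w (lam : int) (p0 p : triple) (l : letter) (j : int) :
  reduced lam p0 p l -> exists l', reduced lam p0 (act_w (j * lam) p) l'.
Proof.
move=> red_p; have [->|j0] := eqVneq j 0; first by rewrite mul0r act_w0; exists l.
move: red_p; case=> [|q l' red_q lX|q l' k red_q lW k0].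
- by exists LastW; apply: (red_w (red_nil _ _) _ j0).
- by exists LastW; apply: (red_w (red_x red_q lX) _ j0).
- rewrite act_wD -mulrDl.
  have [->|kj0] := eqVneq (k + j) 0; first by rewrite mul0r act_w0; exists l'.
  by exists LastW; exact: red_w red_q lW kj0.
Qed.

Lemma reduced_x (lam : int) (p0 p : triple) (l : letter) :
  reduced lam p0 p l -> exists l', reduced lam p0 (act_x p) l'.
Proof.
case=> [|q l' red_q _|q l' k red_q lW k0].
- by exists LastX; apply: (red_x (red_nil _ _)).
- by rewrite act_xK; exists l'.
- by exists LastX; apply: (red_x (red_w red_q lW k0)).
Qed.

Lemma horbit_reduced (lam : int) (p0 q : triple) :
  Horbit lam p0 q -> exists l, reduced lam p0 q l.
Proof.
elim=> [|u _ [l red_u]|u _ [l red_u]|u _ [l red_u]].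
- by exists Start; exact: red_nil.
- exact: reduced_x red_u.
- by have := reduced_w 1 red_u; rewrite mul1r.
- by have := reduced_w (-1) red_u; rewrite mulN1r.
Qed.

Definition c_dominated (t : triple) : Prop :=
  let: (a, _, c) := t in 2 * `|a| <= 3 * `|c|.

Definition b_dominated (t : triple) : Prop :=
  let: (a, b, _) := t in 2 * `|a| <= 3 * `|b|.

Lemma translate_c_dominated (a c mu : int) : 3 <= `|mu| -> 2 * `|a| <= 3 * `|c| ->
  `|a| <= `|a + mu * c| /\ 3 * `|c| <= 2 * `|a + mu * c|.
Proof.
move=> mu3 dom.
have : 3 * `|c| <= `|mu| * `|c| by apply: ler_wpM2r.
have : `|mu * c| <= `|a + mu * c| + `|a| by lia.
rewrite normrM; lia.
Qed.

Lemma b_dominated_of_norm (n a b c : int) : b * c = a ^+ 2 - n -> 0 < `|c| ->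
  3 * `|c| <= 2 * `|a| -> 9 * `|n| <= 5 * `|a| ^+ 2 -> 2 * `|a| <= 3 * `|b|.
Proof.
move=> bc c0 ca na.
have : `|a| ^+ 2 - `|n| <= `|b| * `|c|.
  rewrite -normrM bc real_normK ?num_real //; lia.
nia.
Qed.

Section DominanceInvariant.

Variables (n lam a0 : int).
Hypotheses (lam3 : 3 <= `|lam|) (a0_gt0 : 0 < a0) (n_small : 9 * `|n| <= 5 * a0 ^+ 2).

(* Invariant along a reduced word: membership in A(n), |a| >= a0, and the
   dominance needed by the letters that may follow. *)
Definition good (t : triple) (l : letter) : Prop :=
  [/\ inA n t, a0 <= `|t.1.1|, l <> LastW -> c_dominated t
    & l <> LastX -> b_dominated t].

Lemma good_x (t : triple) : b_dominated t -> good t LastW -> good (act_x t) LastX.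
Proof.
case: t => [[a b] c] dom [tA ta0 _ _]; split=> //=; rewrite ?normrN //.
by rewrite /inA sqrrN mulrC.
Qed.

Lemma good_w (t : triple) (k : int) : k != 0 -> c_dominated t -> good t LastX ->
  good (act_w (k * lam) t) LastW.
Proof.
case: t => [[a b] c] k0 /= dom [tA /= ta0 _ _].
have mu3 : 3 <= `|k * lam| by rewrite normrM; move: k0; nia.
have [ge_a dom_c] := translate_c_dominated mu3 dom.
have bc : (2 * (k * lam) * a + b + (k * lam) ^+ 2 * c) * c
          = (a + k * lam * c) ^+ 2 - n by move: tA; rewrite /inA; lra.
split=> [//|/=|//|_]; first lra.
apply: b_dominated_of_norm bc _ dom_c _; first lia.
have a0_le : a0 <= `|a + k * lam * c| by lia.
have : a0 ^+ 2 <= `|a + k * lam * c| ^+ 2 by rewrite !expr2; apply: ler_pM; lia.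
lia.
Qed.

Lemma reduced_good (p0 p : triple) (l : letter) :
  good p0 Start -> reduced lam p0 p l -> good p l.
Proof.
move=> good0; elim=> [//|q l' _ IH lX|q l' k _ IH lW k0].
- by case: IH => tA ta0 _ /(_ lX) dom; apply: good_x.
- by case: IH => tA ta0 /(_ lW) dom _; apply: good_w.
Qed.

Lemma horbit_lower_bound (p0 : triple) : good p0 Start ->
  forall a b c : int, Horbit lam p0 (a, b, c) -> a0 <= `|a|.
Proof.
by move=> good0 a b c /horbit_reduced [l /(reduced_good good0)] [].
Qed.

End DominanceInvariant.

Lemma alpha_bounds (n s : int) : `|n| + 5 <= s ->
  let a := s ^+ 2 - s - n in
  [/\ 3 * s <= a, 9 * `|n| <= 5 * a ^+ 2 & n < (s - 1) ^+ 2].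
Proof.
move=> hs a.
have a_ge : s ^+ 2 - 2 * s + 5 <= a by rewrite /a; lia.
have s2 : s ^+ 2 = s * s by rewrite expr2.
split; first nia.
- have : 3 * `|n| + 15 <= a by nia.
  rewrite expr2; nia.
- have -> : (s - 1) ^+ 2 = s ^+ 2 - 2 * s + 1 by ring.
  nia.
Qed.

Lemma alpha_good (n s : int) : `|n| + 5 <= s ->
  good n (s ^+ 2 - s - n) (alpha n s) Start.
Proof.
move=> hs; have [a3s _ _] := alpha_bounds hs; rewrite /good /alpha /inA /=.
have -> : (s - 1) ^+ 2 - n = (s ^+ 2 - s - n) - s + 1 by ring.
split=> [||_|_]; [ring | lia | lia | lia].
Qed.

Theorem mainTheorem5 (n lam : int) (hn : squarefree n) (hn1 : n != 1)
    (hlam : 3 <= lam) :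
  exists s0 : int,
    (forall s : int, s0 <= s -> n < (s - 1) ^+ 2) /\
    (forall s t : int, s0 <= t -> t < s -> ~ (Horbit lam (alpha n s) (alpha n t))) /\
    (forall s : int, s0 <= s -> forall a' b' c' : int,
        Horbit lam (alpha n s) (a', b', c') -> s ^+ 2 - s - n <= `|a'|).
Proof.
have lam3 : 3 <= `|lam| by lia.
have bound s : `|n| + 5 <= s -> forall a' b' c' : int,
    Horbit lam (alpha n s) (a', b', c') -> s ^+ 2 - s - n <= `|a'|.
  move=> hs; have [a3s na _] := alpha_bounds hs.
  by apply: horbit_lower_bound (alpha_good hs) => //; lia.
exists (`|n| + 5); split; [|split; last exact: bound].
- by move=> s /alpha_bounds [].
- move=> s t ht hts /bound; have [a3t _ _] := alpha_bounds ht.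
  have : t ^+ 2 - t < s ^+ 2 - s by rewrite !expr2; nia.
  lia.
Qed.
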